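(* Let $U\subseteq L_{\mathrm{up}}$ be a set of up-links such that the sets $P_u$, $u\in U$, are pairwise disjoint, let $(C,A)$ be a (weakly) connected component of the dependency graph of $U$ (which is an arborescence), and let $k\in\mathbb{Z}_{\ge0}$. If for every directed path in $(C,A)$ with arc set $H\subseteq A$ we have $|\{u\in U\colon H\cap A_u\neq\emptyset\}|\le k$, then $C$ is $(k+1)$-thin.
   Context: Let $(G=(V,E),L,w)$ be a WTAP instance (spanning tree $G$, links $L\subseteq\binom V2$, weights $w>0$) with a fixed root $r\in V$, and let $F\subseteq L$ be a WTAP solution, i.e. $\bigcup_{\ell\in F}P_\ell=E$, where $P_\ell$ is the edge set of the tree path between the endpoints of $\ell$ and $V_\ell$ its vertex set. A link set $X$ is $k$-thin if every vertex of $V$ lies in $V_\ell$ for at most $k$ links $\ell\in X$. Ancestors of $v$ are the vertices on the $r$-$v$ path in $G$ (including $r$ and $v$); descendants are defined reciprocally. $\mathrm{apex}(\ell)$ is the vertex of $V_\ell$ closest to $r$. An up-link is a link $\{t,b\}$ with $t$ an ancestor of $b$; $L_{\mathrm{up}}$ is the set of up-links. For $v\in V$ let $B_v=\{\ell\in F\colon\mathrm{apex}(\ell)\text{ is a descendant of }v\}$. For an up-link $u=\{t,b\}$ with $t$ an ancestor of $b$, let $v_u$ be the ancestor of $t$ farthest from $r$ such that $P_u\subseteq\bigcup_{\ell\in B_{v_u}}P_\ell$, and fix $F_u\subseteq B_{v_u}$ inclusion-wise minimal with $P_u\subseteq\bigcup_{\ell\in F_u}P_\ell$. For $\ell\in F_u$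 let $P_{u,\ell}=P_u\setminus\bigcup_{\bar\ell\in F_u\setminus\{\ell\}}P_{\bar\ell}$; these sets are nonempty, pairwise disjoint, and each is the edge set of a path. Define $\ell_1\prec_u\ell_2$ iff the edges of $P_{u,\ell_1}$ appear before those of $P_{u,\ell_2}$ on the $t$-$b$ path in $G$. If $\ell_1\prec_u\cdots\prec_u\ell_q$ are the links of $F_u$, let $A_u=\{(\ell_i,\ell_{i+1})\colon i=1,\dots,q-1\}$. The dependency graph of $U\subseteq L_{\mathrm{up}}$ is the directed graph with vertex set $F$ whose arc set is the disjoint union of the $A_u$, $u\in U$. When the $P_u$, $u\in U$, are pairwise disjoint, this graph is a branching (no directed cycles, in-degrees at most one), so each weakly connected component is an arborescence. *)

From mathcomp Require Import all_boot all_order all_algebra.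
Set Implicit Arguments. Unset Strict Implicit. Unset Printing Implicit Defensive.

(* The rooted spanning tree G is given by a parent function [par] with root
   [r] (see the tree hypotheses in the theorem).  The edge {x, par x} of G is
   represented by its child endpoint x (x <> r).  A link is a 2-element
   vertex set {set V}. *)
Section WTAP.
Variables (V : finType) (r : V) (par : V -> V).

Definition anc (u v : V) : bool :=
  [exists n : 'I_#|V|.+1, iter n par v == u].

(* number of vertices on the r-x path (= distance from r, plus one) *)
Definition depth (x : V) : nat := #|[set y | anc y x]|.

(* vertex set V_l of the tree path between the endpoints of l *)
Definition Vl (l : {set V}) : {set V} :=
  [set x | [exists a in l, anc x a] &&
           [forall y, [forall a in l, anc y a] ==> anc y x]].

(* edge set P_l of the tree path (edges as child vertices) *)
Definition Pl (l : {set V}) : {set V} :=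
  [set x | [&& x != r, x \in Vl l & par x \in Vl l]].

Definition is_apex (l : {set V}) (x : V) : bool :=
  (x \in Vl l) && [forall y in Vl l, depth x <= depth y].

Definition is_uplink (l : {set V}) : bool :=
  (#|l| == 2) && [exists t in l, exists b in l, (t != b) && anc t b].

Definition top (u : {set V}) (t : V) : bool :=
  (t \in u) && [forall b in u, anc t b].

Variable F : {set {set V}}.

Definition B (v : V) : {set {set V}} :=
  [set l in F | [exists x, is_apex l x && anc v x]].

Definition covers (P : {set V}) (X : {set {set V}}) : bool :=
  P \subset \bigcup_(l in X) Pl l.

Definition is_vu (u : {set V}) (v : V) : bool :=
  [exists t, [&& top u t, anc v t, covers (Pl u) (B v) &
     [forall w, (anc w t && covers (Pl u) (B w)) ==> (depth w <= depth v)]]].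

Definition valid_Fu (u : {set V}) (Fu : {set {set V}}) : bool :=
  [exists v, is_vu u v &&
     minset (fun X : {set {set V}} => (X \subset B v) && covers (Pl u) X) Fu].

Variable Fu : {set V} -> {set {set V}}.

Definition Pul (u l : {set V}) : {set V} :=
  Pl u :\: \bigcup_(l' in Fu u :\ l) Pl l'.

(* l1 <_u l2: edges of P_{u,l1} appear before those of P_{u,l2} on the t-b path *)
Definition precu (u l1 l2 : {set V}) : bool :=
  [forall e in Pul u l1, forall e' in Pul u l2, depth e < depth e'].

(* arcs of the dependency graph: ((u, tail), head), an arc of A_u *)
Definition arcT := ({set V} * {set V} * {set V})%type.

Definition in_Au (u : {set V}) (a : arcT) : bool :=
  [&& a.1.1 == u, a.1.2 \in Fu u, a.2 \in Fu u, precu u a.1.2 a.2 &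
      [forall l3 in Fu u, ~~ (precu u a.1.2 l3 && precu u l3 a.2)]].

Variable U : {set {set V}}.

Definition is_arc (a : arcT) : bool := (a.1.1 \in U) && in_Au a.1.1 a.

Definition adj (l1 l2 : {set V}) : bool :=
  [exists a : arcT, is_arc a &&
     (((a.1.2 == l1) && (a.2 == l2)) || ((a.1.2 == l2) && (a.2 == l1)))].

Definition is_wcomp (C : {set {set V}}) : bool :=
  [exists l0 in F, C == [set l | connect adj l0 l]].

Definition path_vertices (s : seq arcT) : seq {set V} :=
  if s is a :: _ then a.1.2 :: map snd s else [::].

Definition dpath_in (C : {set {set V}}) (s : seq arcT) : bool :=
  [&& all (fun a => [&& is_arc a, a.1.2 \in C & a.2 \in C]) s,
      sorted (fun a b : arcT => a.2 == b.1.2) s &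
      uniq (path_vertices s)].

Definition thin (k : nat) (X : {set {set V}}) : bool :=
  [forall x : V, #|[set l in X | x \in Vl l]| <= k].

End WTAP.

From mathcomp Require Import all_boot all_order all_algebra.

(* Fix a vertex x and let S be the set of links of C whose tree path contains x.  In the
   dependency branching every link has at most one entering arc, and following entering arcs
   upwards from a link m of S with deepest apex gives a directed path through every other link
   of S: two links of S hanging below distinct children of a common link lam would yield, for the
   up-link u of one of these arcs, a cover of P_u by links of B_w with w strictly below v_u,
   against the maximality of v_u.  Along this path, distinct links of S other than m are left
   through arcs of distinct up-links: for two arcs of the same A_u with tails containing x, the
   apex of the later head would lie on the path of the earlier tail, so that <_u would skip a
   link of F_u.  Hence |S| - 1 is at most the number of up-links used by the path, that is at
   most k. *)

Set Implicit Arguments.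
Unset Strict Implicit.
Unset Printing Implicit Defensive.

Section RootedTree.
Variables (V : finType) (r : V) (par : V -> V).
Hypotheses (par_r : par r = r) (reach_r : forall v, exists n, iter n par v = r).

Local Notation anc := (anc par).
Local Notation depth := (depth par).
Local Notation Vl := (Vl par).
Local Notation Pl := (Pl r par).

Lemma iter_par_r n : iter n par r = r.
Proof. by elim: n => //= n ->. Qed.

Lemma iter_par_r_ge v i n : iter i par v = r -> i <= n -> iter n par v = r.
Proof. by move=> hi hin; rewrite -(subnK hin) iterD hi iter_par_r. Qed.

Lemma iter_par_cycle v p : iter p par v = v -> 0 < p -> v = r.
Proof.
move=> hp p_gt0.
have hk k : iter (k * p) par v = v by elim: k => // k IH; rewrite mulSn iterD IH hp.
have [n hn] := reach_r v.
by rewrite -(hk n); apply: iter_par_r_ge hn _; rewrite leq_pmulr.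
Qed.

Lemma reach_r_bounded v : exists2 i, i <= #|V| & iter i par v = r.
Proof.
pose f (i : 'I_#|V|.+1) := iter i par v.
have /injectivePn [i [j ij fij]] : ~~ injectiveb f.
  by apply/injectiveP => /leq_card; rewrite card_ord ltnn.
wlog lt_ij : i j ij fij / i < j.
  move=> W; case: (ltngtP i j) => [||/val_inj eq_ij]; first exact: W.
  - by apply: (W j i) => //; rewrite eq_sym.
  - by rewrite eq_ij eqxx in ij.
exists i; first by rewrite -ltnS.
apply: (@iter_par_cycle _ (j - i)); last by rewrite subn_gt0.
by rewrite -iterD subnK ?(ltnW lt_ij) // -fij.
Qed.

Lemma ancP u v : reflect (exists n, iter n par v = u) (anc u v).
Proof.
apply: (iffP existsP) => [[n /eqP h]|[n h]]; first by exists n.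
have [i le_iV hi] := reach_r_bounded v.
case: (leqP n i) => [le_ni|lt_in].
  have ltn : n < #|V|.+1 by rewrite ltnS (leq_trans le_ni).
  by exists (Ordinal ltn); apply/eqP.
have lti : i < #|V|.+1 by rewrite ltnS.
by exists (Ordinal lti); rewrite /= hi -h (iter_par_r_ge hi (ltnW lt_in)).
Qed.

Lemma anc_refl u : anc u u.
Proof. by apply/ancP; exists 0. Qed.

Lemma anc_trans u v w : anc u v -> anc v w -> anc u w.
Proof.
move=> /ancP [n hn] /ancP [m hm]; apply/ancP; exists (n + m).
by rewrite iterD hm hn.
Qed.

Lemma anc_r v : anc r v.
Proof. exact/ancP/reach_r. Qed.

Lemma anc_par v : anc (par v) v.
Proof. by apply/ancP; exists 1. Qed.

Lemma par_fixed_r v : par v = v -> v = r.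
Proof. by move=> h; apply: (@iter_par_cycle v 1). Qed.

Lemma anc_antisym u v : anc u v -> anc v u -> u = v.
Proof.
move=> /ancP [[|n] hn] /ancP [m hm] //.
have hv : iter (m + n.+1) par v = v by rewrite iterD hn.
by rewrite -hn (iter_par_cycle hv (ltn_addl m (ltn0Sn n))) iter_par_r.
Qed.

Lemma anc_total u w x : anc u x -> anc w x -> anc u w || anc w u.
Proof.
move=> /ancP [n hn] /ancP [m hm]; case: (leqP n m) => h; apply/orP.
  by right; apply/ancP; exists (m - n); rewrite -hm -hn -iterD subnK.
by left; apply/ancP; exists (n - m); rewrite -hm -hn -iterD subnK // ltnW.
Qed.

Lemma depth_anc u v : anc u v -> depth u <= depth v.
Proof.
move=> huv; apply/subset_leq_card/subsetP => y.
by rewrite !inE => /anc_trans; apply.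
Qed.

Lemma depth_anc_lt u v : anc u v -> u != v -> depth u < depth v.
Proof.
move=> huv neq_uv; apply/proper_card/properP; split.
  by apply/subsetP => y; rewrite !inE => /anc_trans; apply.
exists v; rewrite !inE ?anc_refl //; apply: contra neq_uv => hvu.
by rewrite (anc_antisym huv hvu).
Qed.

Lemma anc_depth_eq u v : anc u v -> depth v <= depth u -> u = v.
Proof.
move=> huv; apply: contraTeq => neq_uv.
by rewrite -ltnNge depth_anc_lt.
Qed.

Lemma anc_par_neq u v : anc u v -> u != v -> anc u (par v).
Proof.
move=> /ancP [[|n] hn] neq_uv; first by rewrite -hn eqxx in neq_uv.
by apply/ancP; exists n; rewrite -iterSr.
Qed.

Lemma anc_depth_lt x y z : anc x z -> anc y z -> depth x < depth y -> anc x y.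
Proof.
move=> hxz hyz lt_xy; case/orP: (anc_total hxz hyz) => // hyx.
by have := depth_anc hyx; rewrite leqNgt lt_xy.
Qed.

(** * Tree paths of links *)

Definition common_anc (l : {set V}) : {set V} := [set y | [forall a in l, anc y a]].

(* Junk for [l = set0]; see [is_apexE] for the relation with [is_apex]. *)
Definition apex (l : {set V}) : V := [arg max_(y > r in common_anc l) depth y].

Lemma common_ancP (l : {set V}) y : reflect (forall a, a \in l -> anc y a) (y \in common_anc l).
Proof. by rewrite inE; apply: (iffP forall_inP). Qed.

Lemma common_anc_r (l : {set V}) : r \in common_anc l.
Proof. by apply/common_ancP => a _; apply: anc_r. Qed.

Lemma apex_common_anc (l : {set V}) : apex l \in common_anc l.
Proof. by rewrite /apex; case: arg_maxnP => //; apply: common_anc_r. Qed.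

Lemma anc_apex_mem (l : {set V}) a : a \in l -> anc (apex l) a.
Proof. by move/(common_ancP _ _ (apex_common_anc l)). Qed.

Lemma common_anc_apex (l : {set V}) a y : a \in l -> y \in common_anc l -> anc y (apex l).
Proof.
move=> ha hy; have hmax : depth y <= depth (apex l).
  by rewrite /apex; case: arg_maxnP => [|z _]; [apply: common_anc_r | apply].
have hya := common_ancP _ _ hy a ha.
case/orP: (anc_total hya (anc_apex_mem ha)) => // hAy.
by rewrite (anc_depth_eq hAy hmax) anc_refl.
Qed.

Lemma VlE (l : {set V}) x : (x \in Vl l) = [exists a in l, anc x a] && anc (apex l) x.
Proof.
rewrite inE; case: existsP => [[a /andP [ha _]]|] //=.
have hA := apex_common_anc l; rewrite inE in hA.
apply/forallP/idP => [/(_ (apex l)) /implyP -> //|hAx y].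
by apply/implyP => hy; apply: anc_trans hAx; apply: (common_anc_apex ha); rewrite inE.
Qed.

Lemma Vl_anc_apex (l : {set V}) x : x \in Vl l -> anc (apex l) x.
Proof. by rewrite VlE => /andP []. Qed.

Lemma apex_Vl (l : {set V}) a : a \in l -> apex l \in Vl l.
Proof.
move=> ha; rewrite VlE anc_refl andbT; apply/existsP; exists a.
by rewrite ha anc_apex_mem.
Qed.

Lemma Vl_neq0 (l : {set V}) x : x \in Vl l -> l != set0.
Proof. by rewrite VlE => /andP [/exists_inP [a ha _] _]; apply/set0Pn; exists a. Qed.

Lemma Vl_convex (l : {set V}) y z : anc (apex l) y -> anc y z -> z \in Vl l -> y \in Vl l.
Proof.
move=> hAy hyz; rewrite !VlE hAy andbT => /andP [/exists_inP [a ha hza] _].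
by apply/exists_inP; exists a; last exact: anc_trans hyz hza.
Qed.

Lemma PlE (l : {set V}) x : (x \in Pl l) = (x \in Vl l) && (x != apex l).
Proof.
rewrite inE; apply/and3P/andP => [[neq_xr hx hpx]|[hx neq_xA]].
  split=> //; apply: contra neq_xr => /eqP eq_xA.
  have hxp : anc x (par x) by rewrite {1}eq_xA Vl_anc_apex.
  by rewrite (par_fixed_r (esym (anc_antisym hxp (anc_par x)))).
have hAx := Vl_anc_apex hx.
have neq_xr : x != r.
  apply: contra neq_xA => /eqP eq_xr; rewrite eq_xr in hAx *.
  by rewrite (anc_antisym (anc_r _) hAx).
split=> //; apply: Vl_convex (anc_par x) hx.
by apply: anc_par_neq; rewrite // eq_sym.
Qed.

Lemma Pl_Vl (l : {set V}) x : x \in Pl l -> x \in Vl l.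
Proof. by rewrite PlE => /andP []. Qed.

Lemma Pl_anc_apex (l : {set V}) x : x \in Pl l -> anc (apex l) x /\ apex l != x.
Proof. by rewrite PlE eq_sym => /andP [/Vl_anc_apex]. Qed.

Lemma Vl_Pl (l : {set V}) x : x \in Vl l -> apex l != x -> x \in Pl l.
Proof. by rewrite PlE eq_sym => -> ->. Qed.

Lemma Pl_convex (l : {set V}) y z :
  anc (apex l) y -> apex l != y -> anc y z -> z \in Pl l -> y \in Pl l.
Proof. by move=> hAy neq_Ay hyz /Pl_Vl hz; apply: Vl_Pl (Vl_convex hAy hyz hz) neq_Ay. Qed.

Lemma is_apexE (l : {set V}) x : is_apex par l x = (l != set0) && (x == apex l).
Proof.
apply/andP/andP => [[hx /forall_inP hmin]|[/set0Pn [a ha] /eqP ->]].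
  split; first exact: Vl_neq0 hx.
  have [a ha] : exists a, a \in l by apply/set0Pn/(Vl_neq0 hx).
  by rewrite -(anc_depth_eq (Vl_anc_apex hx) (hmin _ (apex_Vl ha))).
split; first exact: apex_Vl ha.
by apply/forall_inP => y /Vl_anc_apex /depth_anc.
Qed.

Lemma mem_B F v (l : {set V}) : (l \in B par F v) = [&& l \in F, l != set0 & anc v (apex l)].
Proof.
rewrite inE; congr (_ && _); apply/existsP/andP => [[x]|[nz_l hv]].
  by rewrite is_apexE => /andP [/andP [-> /eqP ->] ->].
by exists (apex l); rewrite is_apexE nz_l eqxx.
Qed.

(** * Up-links and their minimal covers *)

Lemma uplinkP u : is_uplink par u -> exists t b, [/\ t != b, anc t b & u = [set t; b]].
Proof.
case/andP => /eqP card_u /exists_inP [t ht /exists_inP [b hb /andP [neq_tb htb]]].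
exists t, b; split => //; apply/esym/eqP.
by rewrite eqEcard card_u cards2 neq_tb andbT; apply/subsetP => y /set2P [] ->.
Qed.

Definition bottom (u : {set V}) : V := odflt r [pick b in u | b != apex u].

Section TwoEndpoints.
Variables (t b : V).
Hypotheses (neq_tb : t != b) (anc_tb : anc t b).

Lemma apex_set2 : apex [set t; b] = t.
Proof.
have ht : t \in common_anc [set t; b].
  by apply/common_ancP => a /set2P [] ->; rewrite ?anc_refl.
exact: anc_antisym (anc_apex_mem (set21 t b)) (common_anc_apex (set21 t b) ht).
Qed.

Lemma bottom_set2 : bottom [set t; b] = b.
Proof.
rewrite /bottom apex_set2; case: pickP => [y /andP [/set2P [] -> //]|/(_ b)].
  by rewrite eqxx.
by rewrite set22 eq_sym neq_tb.
Qed.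

Lemma Pl_set2 y : (y \in Pl [set t; b]) = [&& anc t y, anc y b & y != t].
Proof.
rewrite PlE VlE apex_set2; apply/andP/and3P => [[/andP [hy hty] neq_yt]|[hty hyb ->]].
  split=> //; case/exists_inP: hy => z /set2P [] -> // hyt.
  by rewrite (anc_antisym hyt hty) eqxx in neq_yt.
by split=> //; rewrite hty andbT; apply/exists_inP; exists b; rewrite ?set22.
Qed.

Lemma top_set2 t' : top par [set t; b] t' -> t' = t.
Proof.
case/andP => /set2P [] // -> /forall_inP /(_ t (set21 t b)) hbt.
by move: neq_tb; rewrite (anc_antisym anc_tb hbt) eqxx.
Qed.

End TwoEndpoints.

Lemma uplink_bottom u : is_uplink par u ->
  [/\ apex u != bottom u, anc (apex u) (bottom u) &
      forall y, (y \in Pl u) = [&& anc (apex u) y, anc y (bottom u) & y != apex u]].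
Proof.
case/uplinkP => t [b [neq_tb htb ->]].
by rewrite apex_set2 // bottom_set2 //; split=> //; apply: Pl_set2.
Qed.

Lemma uplink_top u t : is_uplink par u -> top par u t -> t = apex u.
Proof. by case/uplinkP => t' [b [neq_tb htb ->]] /top_set2 ->; rewrite ?apex_set2. Qed.

Lemma covers_subset P (X Y : {set {set V}}) : X \subset Y -> covers r par P X -> covers r par P Y.
Proof.
move=> /subsetP sXY /subsetP cov; apply/subsetP => e /cov /bigcupP [l hl he].
by apply/bigcupP; exists l; first exact: sXY.
Qed.

Lemma coversP P (X : {set {set V}}) e :
  covers r par P X -> e \in P -> exists2 l, l \in X & e \in Pl l.
Proof. by move=> /subsetP cov /cov /bigcupP. Qed.

Section UplinkCovers.
Variables (F : {set {set V}}) (Fu : {set V} -> {set {set V}}) (U : {set {set V}}).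
Hypotheses (U_uplink : forall u, u \in U -> is_uplink par u)
  (Fu_valid : forall u, u \in U -> valid_Fu r par F u (Fu u)).

Section OneUplink.
Variable u : {set V}.
Hypothesis hu : u \in U.

Local Notation t := (apex u).
Local Notation b := (bottom u).
Local Notation Pul := (Pul r par Fu u).
Local Notation prec := (precu r par Fu u).
Local Notation covers := (covers r par).

Lemma Fu_spec : [/\ covers (Pl u) (Fu u),
  forall X : {set {set V}}, X \subset Fu u -> covers (Pl u) X -> X = Fu u &
  exists2 v, Fu u \subset B par F v &
    forall w, anc w t -> covers (Pl u) (B par F w) -> depth w <= depth v].
Proof.
have /existsP [v /andP [v_u /minsetP [/andP [sFuB cov] Fumin]]] := Fu_valid hu.
have /existsP [t' /and4P [ht' _ _ /forallP vmax]] := v_u.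
rewrite (uplink_top (U_uplink hu) ht') in vmax; split=> //.
  by move=> X sXFu covX; apply: Fumin => //; rewrite (subset_trans sXFu sFuB).
by exists v => // w hwt covw; have := vmax w; rewrite hwt covw.
Qed.

Lemma Fu_covers : covers (Pl u) (Fu u).
Proof. by case: Fu_spec. Qed.

Lemma Fu_minimal (X : {set {set V}}) : X \subset Fu u -> covers (Pl u) X -> X = Fu u.
Proof. by case: Fu_spec => _ Fumin _; apply: Fumin. Qed.

Lemma Fu_in_B w (l : {set V}) : l \in Fu u -> anc w (apex l) -> l \in B par F w.
Proof.
case: Fu_spec => _ _ [v /subsetP sFuB _] /sFuB.
by rewrite !mem_B => /and3P [-> -> _].
Qed.

Lemma Fu_deep w (l : {set V}) :
  anc w t -> covers (Pl u) (B par F w) -> l \in Fu u -> depth w <= depth (apex l).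
Proof.
case: Fu_spec => _ _ [v /subsetP sFuB vmax] hwt covw /sFuB.
rewrite mem_B => /and3P [_ _ /depth_anc]; exact: leq_trans (vmax w hwt covw).
Qed.

Lemma Pl_uplink_top y : y \in Pl u -> anc t y /\ t != y.
Proof. by case: (uplink_bottom (U_uplink hu)) => _ _ ->; rewrite eq_sym => /and3P []. Qed.

Lemma Pl_uplink_bottom y : y \in Pl u -> anc y b.
Proof. by case: (uplink_bottom (U_uplink hu)) => _ _ -> /and3P []. Qed.

Lemma anc_top_notin_Pl y : anc y b -> y \notin Pl u -> anc y t.
Proof.
case: (uplink_bottom (U_uplink hu)) => _ htb PuE hyb.
case/orP: (anc_total hyb htb) => // hty; case: (eqVneq y t) => [->|neq_yt].
  by rewrite anc_refl.
by rewrite PuE hty hyb neq_yt.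
Qed.

Lemma Pl_uplink_convex (l : {set V}) y z :
  anc (apex l) t -> y \in Pl u -> anc y z -> z \in Pl l -> y \in Pl l.
Proof.
move=> hlt hy hyz hz; have [hty neq_ty] := Pl_uplink_top hy.
apply: Pl_convex hyz hz; first exact: anc_trans hlt hty.
by apply: contra neq_ty => /eqP eq_ly; rewrite -eq_ly in hty *; rewrite (anc_antisym hty hlt).
Qed.

Lemma PulP l e : e \in Pul l ->
  [/\ e \in Pl u, e \in Pl l & forall l', l' \in Fu u -> l' != l -> e \notin Pl l'].
Proof.
rewrite inE => /andP [he_other heu].
have he_only l' : l' \in Fu u -> l' != l -> e \notin Pl l'.
  move=> hl' neq_l'l; apply: contra he_other => hel'.
  by apply/bigcupP; exists l'; rewrite // !inE neq_l'l.
split=> //; have [l'' hl'' hel''] := coversP Fu_covers heu.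
by case: (eqVneq l'' l) => [<- //|neq]; rewrite (negPf (he_only _ hl'' neq)) in hel''.
Qed.

Lemma Pul_neq0 l : l \in Fu u -> exists e, e \in Pul l.
Proof.
move=> hl; apply/set0Pn; apply: contraTneq hl => Pul0.
have cov : covers (Pl u) (Fu u :\ l).
  apply/subsetP => e heu; apply: contraT => he_other.
  have : e \in Pul l by rewrite inE he_other heu.
  by rewrite Pul0 inE.
by rewrite -(Fu_minimal (subsetDl _ _) cov) setD11.
Qed.

Lemma apex_Fu_bottom l : l \in Fu u -> anc (apex l) b.
Proof.
move=> hl; have [e he] := Pul_neq0 hl; have [heu hel _] := PulP he.
exact: anc_trans (Pl_anc_apex hel).1 (Pl_uplink_bottom heu).
Qed.

Lemma apex_Fu_total l l' : l \in Fu u -> l' \in Fu u ->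
  anc (apex l) (apex l') || anc (apex l') (apex l).
Proof. by move=> hl hl'; apply: anc_total (apex_Fu_bottom hl) (apex_Fu_bottom hl'). Qed.

Lemma prec_depth_lt l l' e e' : prec l l' -> e \in Pul l -> e' \in Pul l' -> depth e < depth e'.
Proof. by move=> /forall_inP /(_ e) hll' he /(forall_inP (hll' he)); apply. Qed.

Lemma prec_Pul_anc l l' e e' : prec l l' -> e \in Pul l -> e' \in Pul l' -> anc e e'.
Proof.
move=> hll' he he'; have [heu _ _] := PulP he; have [heu' _ _] := PulP he'.
exact: anc_depth_lt (Pl_uplink_bottom heu) (Pl_uplink_bottom heu') (prec_depth_lt hll' he he').
Qed.

(* [P_{u,l}] and [P_{u,l'}] are disjoint segments of the vertical path [P_u], and
   [P_{u,l'}] cannot lie above [P_{u,l}] since it would then be inside [P_l]. *)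
Lemma prec_of_anc_apex l l' : l \in Fu u -> l' \in Fu u -> l != l' ->
  anc (apex l) (apex l') -> prec l l'.
Proof.
move=> hl hl' neq_ll' hA; apply/forall_inP => e he; apply/forall_inP => e' he'.
have [heu hel _] := PulP he; have [heu' hel' he'_only] := PulP he'.
case/orP: (anc_total (Pl_uplink_bottom heu) (Pl_uplink_bottom heu')) => hee'.
  apply: depth_anc_lt hee' _; apply: contraNneq (he'_only _ hl neq_ll') => <-.
  exact: hel.
have [hA' neq_A'e'] := Pl_anc_apex hel'.
have /negP[] := he'_only _ hl neq_ll'; apply: Pl_convex hee' hel.
  exact: anc_trans hA hA'.
by apply: contra neq_A'e' => /eqP eq_Ae'; rewrite -eq_Ae' in hA' *; rewrite (anc_antisym hA hA').
Qed.

Lemma prec_asym l l' : l \in Fu u -> l' \in Fu u -> prec l l' -> prec l' l -> False.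
Proof.
move=> hl hl' hll' hl'l; have [e he] := Pul_neq0 hl; have [e' he'] := Pul_neq0 hl'.
have := ltn_trans (prec_depth_lt hll' he he') (prec_depth_lt hl'l he' he).
by rewrite ltnn.
Qed.

Lemma prec_neq l l' : l \in Fu u -> prec l l' -> l != l'.
Proof. by move=> hl hll'; apply/eqP => eq_ll'; subst l'; apply: (prec_asym hl hl hll' hll'). Qed.

Lemma prec_total l l' : l \in Fu u -> l' \in Fu u -> l != l' -> prec l l' \/ prec l' l.
Proof.
move=> hl hl' neq_ll'; case/orP: (apex_Fu_total hl hl') => hA.
  by left; apply: prec_of_anc_apex.
by right; apply: prec_of_anc_apex; rewrite // eq_sym.
Qed.

Lemma Fu_top_unique l l' : l \in Fu u -> l' \in Fu u ->
  anc (apex l) t -> anc (apex l') t -> l = l'.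
Proof.
move=> hl hl' hlt hl't; apply/eqP/contraT => neq_ll'; exfalso.
have neq_l'l : l' != l by rewrite eq_sym.
have [e he] := Pul_neq0 hl; have [e' he'] := Pul_neq0 hl'.
have [heu hel he_only] := PulP he; have [heu' hel' he'_only] := PulP he'.
case/orP: (anc_total (Pl_uplink_bottom heu) (Pl_uplink_bottom heu')) => hee'.
  by have /negP[] := he_only _ hl' neq_l'l; apply: Pl_uplink_convex hl't heu hee' hel'.
by have /negP[] := he'_only _ hl neq_ll'; apply: Pl_uplink_convex hlt heu' hee' hel.
Qed.

Lemma prec_skip_apex l m c : l \in Fu u -> m \in Fu u -> c \in Fu u ->
  prec l m -> prec m c -> apex c \in Pl u -> apex c \notin Pl l.
Proof.
move=> hl hm hc hlm hmc hAu; apply/negP => hAl.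
have [el hel] := Pul_neq0 hl; have [em hem] := Pul_neq0 hm; have [ec hec] := Pul_neq0 hc.
have [_ ell _] := PulP hel; have [emu _ hem_only] := PulP hem.
have [_ ecc _] := PulP hec.
have neq_lm := prec_neq hl hlm; have neq_cm : c != m by rewrite eq_sym prec_neq.
case/orP: (anc_total (Pl_uplink_bottom emu) (Pl_uplink_bottom hAu)) => hem_c.
  have hel_m := prec_Pul_anc hlm hel hem.
  have [hAel neq_Ael] := Pl_anc_apex ell.
  have /negP[] := hem_only _ hl neq_lm; apply: Pl_convex hem_c hAl.
    exact: anc_trans hAel hel_m.
  apply: contra neq_Ael => /eqP eq_Aem; rewrite eq_Aem in hAel *.
  by rewrite (anc_antisym hAel hel_m).
have hem_ec := prec_Pul_anc hmc hem hec.
have /negP[] := hem_only _ hc neq_cm; apply: Pl_convex hem_c _ hem_ec ecc.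
by apply: contraNneq (hem_only _ hl neq_lm) => <-.
Qed.

Lemma Pl_after_apex c l e : c \in Fu u -> l \in Fu u -> apex c \in Pl u -> anc (apex l) t ->
  e \in Pl l -> e \in Pl u -> anc (apex c) e -> apex c != e -> e \in Pl c.
Proof.
move=> hc hl hAcu hlt hel heu hAce neq_Ace.
have [f hf] := Pul_neq0 hc; have [fu fc hf_only] := PulP hf.
have neq_lc : l != c.
  apply: contraTneq hlt => ->; have [htc neq_tc] := Pl_uplink_top hAcu.
  by apply: contra neq_tc => hct; rewrite (anc_antisym htc hct).
case/orP: (anc_total (Pl_uplink_bottom fu) (Pl_uplink_bottom heu)) => hfe.
  by have /negP[] := hf_only _ hl neq_lc; apply: Pl_uplink_convex hlt fu hfe hel.
exact: Pl_convex hAce neq_Ace hfe fc.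
Qed.

Lemma prec_succ_apex l l' : l \in Fu u -> l' \in Fu u -> prec l l' ->
  (forall m, m \in Fu u -> ~~ (prec l m && prec m l')) ->
  apex l' \in Pl u /\ apex l' \in Pl l.
Proof.
move=> hl hl' hll' succ.
have hA'u : apex l' \in Pl u.
  apply: contraT => hA'nu; have hl't := anc_top_notin_Pl (apex_Fu_bottom hl') hA'nu.
  have [e he] := Pul_neq0 hl; have [e' he'] := Pul_neq0 hl'.
  have [eu _ he_only] := PulP he; have [_ el' _] := PulP he'.
  have hee' := prec_Pul_anc hll' he he'.
  have neq_l'l : l' != l by rewrite eq_sym prec_neq.
  by have /negP[] := he_only _ hl' neq_l'l; apply: Pl_uplink_convex hl't eu hee' el'.
split=> //; have [m hm hA'm] := coversP Fu_covers hA'u.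
case: (eqVneq m l) => [<- //|neq_ml]; exfalso.
have [hmA' neq_mA'] := Pl_anc_apex hA'm.
have hml' : prec m l'.
  by apply: prec_of_anc_apex hmA' => //; apply: contraNneq neq_mA' => ->.
case: (prec_total hm hl neq_ml) => hmlp.
  by rewrite (negPf (prec_skip_apex hm hl hl' hmlp hll' hA'u)) in hA'm.
by have := succ m hm; rewrite hmlp hml'.
Qed.

Lemma cover_by_prefix c g : c \in Fu u -> apex c \in Pl u ->
  (forall y, y \in Pl u -> anc y (apex c) -> y \in Pl g) ->
  covers (Pl u) (g |: [set l in Fu u | apex l \in Pl u]).
Proof.
move=> hc hAcu prefix; apply/subsetP => e heu; apply/bigcupP.
case: (boolP (anc e (apex c))) => hec; first by exists g; rewrite ?setU11 ?prefix.
have hce : anc (apex c) e.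
  by case/orP: (anc_total (Pl_uplink_bottom heu) (Pl_uplink_bottom hAcu)) => // h; rewrite h in hec.
have neq_ce : apex c != e by apply: contraNneq hec => <-; apply: anc_refl.
have [l hl hel] := coversP Fu_covers heu.
case: (boolP (apex l \in Pl u)) => hAlu.
  by exists l; rewrite // in_setU1 inE hl hAlu orbT.
exists c; first by rewrite in_setU1 inE hc hAcu orbT.
exact: Pl_after_apex hc hl hAcu (anc_top_notin_Pl (apex_Fu_bottom hl) hAlu) hel heu hce neq_ce.
Qed.

(* The cover of [cover_by_prefix] lies in [B_(apex g)], so the maximality of [v_u] puts
   [apex g] no deeper than [v_u], which is an ancestor of every apex of [F_u]. *)
Lemma no_deep_prefix_cover l c g : l \in Fu u -> c \in Fu u -> apex c \in Pl u ->
  g \in B par F (apex g) -> anc (apex l) (apex g) -> apex l != apex g -> anc (apex g) t ->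
  (forall y, y \in Pl u -> anc y (apex c) -> y \in Pl g) -> False.
Proof.
move=> hl hc hAcu hg hlg neq_lg hgt prefix.
have sXB : g |: [set l' in Fu u | apex l' \in Pl u] \subset B par F (apex g).
  apply/subsetP => l'; rewrite in_setU1 inE => /orP [/eqP -> //|/andP [hl' hAl'u]].
  exact: Fu_in_B hl' (anc_trans hgt (Pl_uplink_top hAl'u).1).
have := Fu_deep hgt (covers_subset sXB (cover_by_prefix hc hAcu prefix)) hl.
by rewrite leqNgt depth_anc_lt.
Qed.

End OneUplink.

(** * The dependency branching *)

Hypothesis Pl_disjoint : forall u1 u2, u1 \in U -> u2 \in U -> u1 != u2 ->
  [disjoint Pl u1 & Pl u2].

Local Notation arc := (is_arc r par Fu U).
Local Notation prec := (precu r par Fu).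

Lemma Pl_disjoint_eq u1 u2 y : u1 \in U -> u2 \in U -> y \in Pl u1 -> y \in Pl u2 -> u1 = u2.
Proof.
move=> hu1 hu2 hy1 hy2; apply/eqP/contraT => /(Pl_disjoint hu1 hu2) /disjointFr.
by move/(_ _ hy1); rewrite hy2.
Qed.

Lemma arcP (a : arcT V) : arc a -> [/\ a.1.1 \in U, a.1.2 \in Fu a.1.1, a.2 \in Fu a.1.1,
  prec a.1.1 a.1.2 a.2 & forall m, m \in Fu a.1.1 -> ~~ (prec a.1.1 a.1.2 m && prec a.1.1 m a.2)].
Proof. by case/andP => hu /and5P [_ ? ? ? /forall_inP]. Qed.

Lemma arc_apex (a : arcT V) : arc a -> [/\ apex a.2 \in Pl a.1.1, apex a.2 \in Pl a.1.2,
  anc (apex a.1.2) (apex a.2) & apex a.1.2 != apex a.2].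
Proof.
case/arcP => hu htail hhead hprec succ.
have [hAu hAtail] := prec_succ_apex hu htail hhead hprec succ.
by have [? ?] := Pl_anc_apex hAtail; split.
Qed.

Lemma arc_head_B (a : arcT V) : arc a -> a.2 \in B par F (apex a.2).
Proof. by case/arcP => hu _ hhead _ _; apply: (Fu_in_B hu hhead); apply: anc_refl. Qed.

(* The apex of the head lies in [P_u] for a single [u], and [prec_u] is total on [F_u]. *)
Lemma arc_tail_unique (a a' : arcT V) : arc a -> arc a' -> a.2 = a'.2 -> a.1.2 = a'.1.2.
Proof.
move=> ha ha' eq_head; have [hu htail _ hprec0 succ] := arcP ha.
have [hu' htail' _ hprec' succ'] := arcP ha'.
have [hAu _ _ _] := arc_apex ha; have [hAu' _ _ _] := arc_apex ha'.
rewrite -eq_head in hAu' hprec' succ'.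
have eq_u := Pl_disjoint_eq hu hu' hAu hAu'; rewrite -eq_u in htail' hprec' succ'.
apply/eqP/contraT => neq_tails.
case: (prec_total hu htail htail' neq_tails) => hprec.
  by have := succ _ htail'; rewrite hprec hprec'.
by have := succ' _ htail; rewrite hprec hprec0.
Qed.

Definition in_arc (l : {set V}) : option (arcT V) := [pick a | arc a && (a.2 == l)].

(* A root of the dependency branching is its own parent. *)
Definition dep_par (l : {set V}) : {set V} := if in_arc l is Some a then a.1.2 else l.

Lemma in_arc_some l a : in_arc l = Some a -> [/\ arc a, a.2 = l & dep_par l = a.1.2].
Proof.
rewrite /dep_par => E; rewrite E; move: E.
by rewrite /in_arc; case: pickP => // a' /andP [ha /eqP <-] [<-].
Qed.

Lemma in_arc_none l : in_arc l = None -> dep_par l = l.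
Proof. by rewrite /dep_par => ->. Qed.

Lemma dep_par_arc l : dep_par l != l -> exists a, [/\ arc a, a.2 = l & a.1.2 = dep_par l].
Proof.
case E: (in_arc l) => [a|]; last by rewrite in_arc_none ?eqxx.
by have [ha <- ->] := in_arc_some E; exists a.
Qed.

Lemma dep_par_head a : arc a -> dep_par a.2 = a.1.2.
Proof.
move=> ha; case E: (in_arc a.2) => [a'|].
  by have [ha' eq_head ->] := in_arc_some E; apply: arc_tail_unique.
by move: E; rewrite /in_arc; case: pickP => // /(_ a); rewrite ha eqxx.
Qed.

Lemma anc_apex_dep_par l : anc (apex (dep_par l)) (apex l).
Proof.
case: (eqVneq (dep_par l) l) => [->|/dep_par_arc [a [ha <- <-]]]; first exact: anc_refl.
by case: (arc_apex ha).
Qed.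

Lemma apex_dep_par_neq l : dep_par l != l -> apex (dep_par l) != apex l.
Proof. by case/dep_par_arc => a [ha <- <-]; case: (arc_apex ha). Qed.

Lemma anc_apex_iter_dep_par l m n : m <= n ->
  anc (apex (iter n dep_par l)) (apex (iter m dep_par l)).
Proof.
move=> le_mn; rewrite -(subnK le_mn); elim: (n - m) => [|d IH]; first exact: anc_refl.
by rewrite addSn iterS; apply: anc_trans (anc_apex_dep_par _) IH.
Qed.

Lemma iter_dep_par_fixed l k m : dep_par (iter k dep_par l) = iter k dep_par l -> k <= m ->
  iter m dep_par l = iter k dep_par l.
Proof.
move=> fixk le_km; rewrite -(subnK le_km); elim: (m - k) => [|d IH] //.
by rewrite addSn iterS IH fixk.
Qed.

Lemma dep_par_fixed_before l i : dep_par (iter i dep_par l) != iter i dep_par l ->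
  forall k, k <= i -> dep_par (iter k dep_par l) != iter k dep_par l.
Proof.
move=> nfix k le_ki; apply: contra nfix => /eqP fixk.
by rewrite -iterS !(iter_dep_par_fixed fixk) // leqW.
Qed.

(* Each proper step strictly raises the apex, so the chain stops within [#|V|] steps. *)
Lemma dep_par_fixed_iterV l : dep_par (iter #|V| dep_par l) = iter #|V| dep_par l.
Proof.
have chain n : dep_par (iter n dep_par l) = iter n dep_par l \/
               depth (apex (iter n dep_par l)) + n <= depth (apex l).
  elim: n => [|n [IH|IH]]; first by right; rewrite addn0.
    by left; rewrite iterS IH IH.
  case: (eqVneq (dep_par (iter n dep_par l)) (iter n dep_par l)) => [fixn|nfix].
    by left; rewrite iterS fixn fixn.
  right; rewrite iterS addnS.
  by apply: leq_trans IH; rewrite ltn_add2r depth_anc_lt ?anc_apex_dep_par ?apex_dep_par_neq.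
case: (chain #|V|) => // hdepth.
have depth_gt0 : 0 < depth (apex (iter #|V| dep_par l)).
  by apply/card_gt0P; exists (apex (iter #|V| dep_par l)); rewrite inE anc_refl.
have := leq_trans hdepth (max_card _).
by rewrite -[X in _ <= X]add0n leq_add2r leqNgt depth_gt0.
Qed.

Definition dep_root (l : {set V}) : {set V} := iter #|V| dep_par l.

Lemma dep_root_par l : dep_root (dep_par l) = dep_root l.
Proof. by rewrite /dep_root -iterSr iterS dep_par_fixed_iterV. Qed.

Local Notation adj := (adj r par Fu U).

Lemma dep_root_adj l1 l2 : adj l1 l2 -> dep_root l1 = dep_root l2.
Proof.
case/existsP => a /andP [ha /orP [] /andP [/eqP <- /eqP <-]];
  by rewrite -(dep_root_par a.2) dep_par_head.
Qed.

Lemma connect_dep_root l0 l : connect adj l0 l -> dep_root l = dep_root l0.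
Proof.
case/connectP => p + ->; elim: p l0 => //= l1 p IH l0 /andP [h01 hp].
by rewrite IH // (dep_root_adj h01).
Qed.

Lemma connect_iter_dep_par l0 l n : connect adj l0 l -> connect adj l0 (iter n dep_par l).
Proof.
move=> c0l; elim: n => //= n IH.
case: (eqVneq (dep_par (iter n dep_par l)) (iter n dep_par l)) => [-> //|].
case/dep_par_arc => a [ha head tail]; apply: connect_trans IH (connect1 _).
by apply/existsP; exists a; rewrite ha head tail !eqxx orbT.
Qed.

Lemma sibling_apex_anc_top (a1 a2 : arcT V) : arc a1 -> arc a2 -> a1.1.2 = a2.1.2 ->
  a1.2 != a2.2 -> anc (apex a1.2) (apex a2.2) -> anc (apex a1.2) (apex a2.1.1).
Proof.
move=> ha1 ha2 eq_tail neq_head hA12.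
have [hu1 _ hhead1 hprec1 _] := arcP ha1; have [hu2 _ hhead2 _ succ2] := arcP ha2.
have [hA1u1 _ _ _] := arc_apex ha1; have [hA2u2 _ _ _] := arc_apex ha2.
case: (eqVneq a1.1.1 a2.1.1) => [eq_u|neq_u].
  rewrite eq_u eq_tail in hhead1 hprec1.
  by have := succ2 _ hhead1; rewrite hprec1 (prec_of_anc_apex hu2 hhead1 hhead2 neq_head hA12).
have hA1_notin : apex a1.2 \notin Pl a2.1.1.
  by apply: contra neq_u => hA1u2; rewrite (Pl_disjoint_eq hu1 hu2 hA1u1 hA1u2).
have [htop2 _] := Pl_anc_apex hA2u2.
case/orP: (anc_total hA12 htop2) => // htop_A1.
case: (eqVneq (apex a2.1.1) (apex a1.2)) => [->|neq]; first exact: anc_refl.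
by rewrite (Pl_convex htop_A1 neq hA12 hA2u2) in hA1_notin.
Qed.

Section Siblings.
Variables (a1 a2 : arcT V) (l : {set V}) (i : nat) (x : V).
Hypotheses (ha1 : arc a1) (ha2 : arc a2) (eq_tail : a1.1.2 = a2.1.2) (neq_head : a1.2 != a2.2)
  (chain : iter i dep_par l = a1.2)
  (proper : forall k, k <= i -> dep_par (iter k dep_par l) != iter k dep_par l)
  (hx : x \in Vl l) (hA2x : anc (apex a2.2) x)
  (hA12 : anc (apex a1.2) (apex a2.2)).

Local Notation u2 := a2.1.1.
Local Notation lam := a2.1.2.
Local Notation chainl k := (iter k dep_par l).

Lemma anc_apex_chain_x k : anc (apex (chainl k)) x.
Proof. exact: anc_trans (anc_apex_iter_dep_par l (leq0n k)) (Vl_anc_apex hx). Qed.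

Lemma first_chain_link_above_top : exists k, [/\ k <= i, anc (apex (chainl k)) (apex u2) &
  forall k', k' < k -> ~~ anc (apex (chainl k')) (apex u2)].
Proof.
have hi : exists k, (k <= i) && anc (apex (chainl k)) (apex u2).
  by exists i; rewrite leqnn chain (sibling_apex_anc_top ha1 ha2 eq_tail neq_head hA12).
case: (ex_minnP hi) => k /andP [le_ki hk] kmin; exists k; split=> // k' lt_k'k.
apply/negP => hk'; have := kmin k'; rewrite (leq_trans (ltnW lt_k'k) le_ki) hk'.
by rewrite leqNgt lt_k'k => /(_ isT).
Qed.

(* If the link preceding [chainl k] had its apex strictly above [apex a2.2], that apex would lie
   on [P_u2], making [chainl k] a second link of [F_u2], besides [lam], with apex above
   [apex u2]. *)
Lemma first_chain_link_covers_prefix k y : k <= i ->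
  anc (apex (chainl k)) (apex u2) ->
  (forall k', k' < k -> ~~ anc (apex (chainl k')) (apex u2)) ->
  anc (apex lam) (apex (chainl k)) -> apex lam != apex (chainl k) ->
  y \in Pl u2 -> anc y (apex a2.2) -> y \in Pl (chainl k).
Proof.
have [hu2 htail2 _ _ _] := arcP ha2; have [hA2u2 _ _ _] := arc_apex ha2.
move=> le_ki hgt kmin hlam_g neq_lam_g hyu2 hyA2; have hyx := anc_trans hyA2 hA2x.
have [hty neq_ty] := Pl_uplink_top hu2 hyu2.
have neq_gy : apex (chainl k) != y.
  apply: contra neq_ty => /eqP eq_gy; rewrite eq_gy in hgt.
  by rewrite (anc_antisym hty hgt).
case: k => [|k'] in le_ki hgt kmin hlam_g neq_lam_g neq_gy *.
  exact: Vl_Pl (Vl_convex (anc_trans hgt hty) hyx hx) neq_gy.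
have [a [ha head tail]] := dep_par_arc (proper (ltnW le_ki)).
rewrite -iterS in tail; have [hAz_ua hAz_g _ _] := arc_apex ha.
rewrite head tail in hAz_ua hAz_g.
have hz_below_top := kmin _ (ltnSn k').
have htz : anc (apex u2) (apex (chainl k')).
  case/orP: (anc_total (anc_trans hty hyx) (anc_apex_chain_x k')) => // hzt.
  by rewrite hzt in hz_below_top.
case: (boolP (anc (apex a2.2) (apex (chainl k')))) => hA2z.
  exact: Pl_uplink_convex hgt hyu2 (anc_trans hyA2 hA2z) hAz_g.
have hzA2 : anc (apex (chainl k')) (apex a2.2).
  by case/orP: (anc_total (anc_apex_chain_x k') hA2x) => // h; rewrite h in hA2z.
have neq_tz : apex u2 != apex (chainl k').
  by apply: contraNneq hz_below_top => <-; apply: anc_refl.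
have [hua htail _ _ _] := arcP ha.
have eq_u := Pl_disjoint_eq hua hu2 hAz_ua (Pl_convex htz neq_tz hzA2 hA2u2).
rewrite eq_u tail in htail.
have /eqP[] := neq_lam_g.
by rewrite (Fu_top_unique hu2 htail2 htail (anc_trans hlam_g hgt) hgt).
Qed.

Lemma siblings_no_common_descendant : False.
Proof.
have [hu2 htail2 hhead2 _ _] := arcP ha2; have [hA2u2 _ _ _] := arc_apex ha2.
have [k [le_ki hgt kmin]] := first_chain_link_above_top.
have [hlamA1 neq_lamA1] : anc (apex lam) (apex a1.2) /\ apex lam != apex a1.2.
  by have [_ _] := arc_apex ha1; rewrite eq_tail.
have hA1g : anc (apex a1.2) (apex (chainl k)).
  by rewrite -chain; apply: anc_apex_iter_dep_par.
have hlam_g := anc_trans hlamA1 hA1g.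
have neq_lam_g : apex lam != apex (chainl k).
  apply: contra neq_lamA1 => /eqP eq_lam_g; rewrite eq_lam_g in hlamA1 *.
  by rewrite (anc_antisym hA1g hlamA1).
have [a [ha head _]] := dep_par_arc (proper le_ki).
have := arc_head_B ha; rewrite head => hgB.
apply: (no_deep_prefix_cover hu2 htail2 hhead2 hA2u2 hgB hlam_g neq_lam_g hgt) => y hy hyA2.
exact: first_chain_link_covers_prefix.
Qed.

End Siblings.

Lemma siblings_common_vertex (a1 a2 : arcT V) l1 l2 i1 i2 x :
  arc a1 -> arc a2 -> a1.1.2 = a2.1.2 -> a1.2 != a2.2 ->
  iter i1 dep_par l1 = a1.2 -> iter i2 dep_par l2 = a2.2 ->
  dep_par a1.2 != a1.2 -> dep_par a2.2 != a2.2 ->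
  x \in Vl l1 -> x \in Vl l2 -> False.
Proof.
move=> ha1 ha2 eq_tail neq_head chain1 chain2 proper1 proper2 hx1 hx2.
have hA1x : anc (apex a1.2) x.
  by rewrite -chain1; apply: anc_trans (anc_apex_iter_dep_par _ (leq0n _)) (Vl_anc_apex hx1).
have hA2x : anc (apex a2.2) x.
  by rewrite -chain2; apply: anc_trans (anc_apex_iter_dep_par _ (leq0n _)) (Vl_anc_apex hx2).
case/orP: (anc_total hA1x hA2x) => hA.
  apply: (siblings_no_common_descendant ha1 ha2 eq_tail neq_head chain1 _ hx1 hA2x hA).
  by apply: dep_par_fixed_before; rewrite chain1.
apply: (siblings_no_common_descendant ha2 ha1 (esym eq_tail) _ chain2 _ hx2 hA1x hA).
  by rewrite eq_sym.
by apply: dep_par_fixed_before; rewrite chain2.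
Qed.

Lemma dep_chain_of_common_vertex l0 l m x :
  connect adj l0 l -> connect adj l0 m -> x \in Vl l -> x \in Vl m ->
  depth (apex l) <= depth (apex m) -> exists2 n, n <= #|V| & iter n dep_par m = l.
Proof.
move=> c0l c0m hxl hxm le_lm; set chain := traject dep_par m #|V|.+1.
have hi : exists i, iter i dep_par l \in chain.
  exists #|V|; apply/trajectP; exists #|V| => //.
  by have := connect_dep_root c0m; rewrite -(connect_dep_root c0l).
case: (ex_minnP hi) => [[|i] /trajectP [j lt_jV hlam] imin].
  by exists j; rewrite // -ltnS.
have c1_off : iter i dep_par l \notin chain by apply/negP => /imin; rewrite ltnn.
have proper1 : dep_par (iter i dep_par l) != iter i dep_par l.
  by apply: contraNneq c1_off => <-; rewrite -iterS; apply/trajectP; exists j.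
have hj : exists j, iter j dep_par m == iter i.+1 dep_par l by exists j; rewrite hlam.
case: (ex_minnP hj) => [[|j'] /eqP /= eq_lam jmin].
  have := depth_anc_lt (anc_apex_dep_par _) (apex_dep_par_neq proper1).
  rewrite -eq_lam => /leq_trans /(_ (depth_anc (anc_apex_iter_dep_par l (leq0n i)))).
  by rewrite ltnNge le_lm.
have le_j'j : j' < j by apply: jmin; rewrite -iterS hlam.
have proper2 : dep_par (iter j' dep_par m) != iter j' dep_par m.
  rewrite eq_lam; apply/eqP => eq_j'.
  by have := jmin j'; rewrite eq_j' eqxx ltnn => /(_ isT).
have [a1 [ha1 head1 tail1]] := dep_par_arc proper1.
have [a2 [ha2 head2 tail2]] := dep_par_arc proper2.
exfalso; apply: (siblings_common_vertex ha1 ha2 _ _ (esym head1) (esym head2) _ _ hxl hxm).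
- by rewrite tail1 tail2 eq_lam.
- rewrite head1 head2; apply: contraNneq c1_off => ->.
  by apply/trajectP; exists j'; first exact: ltn_trans le_j'j lt_jV.
- by rewrite -head1 in proper1.
- by rewrite -head2 in proper2.
Qed.

(* The last (at most) [n] arcs of the path of the branching from its root down to [l]. *)
Fixpoint dep_path (n : nat) (l : {set V}) : seq (arcT V) :=
  if n is n'.+1 then
    if in_arc l is Some a then rcons (dep_path n' a.1.2) a else [::]
  else [::].

Lemma dep_path_mem n l a : a \in dep_path n l ->
  arc a /\ exists k, a.2 = iter k dep_par l /\ a.1.2 = iter k.+1 dep_par l.
Proof.
elim: n l => [|n IH] l //=; case E: (in_arc l) => [a'|] //.
have [ha' <- tail'] := in_arc_some E.
rewrite mem_rcons in_cons => /predU1P [->|/IH [ha [k [-> ->]]]].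
  by split=> //; exists 0; rewrite /= tail'.
by split=> //; exists k.+1; rewrite -iterS !iterSr tail'.
Qed.

Lemma dep_path_last n l a0 : dep_path n l != [::] -> (last a0 (dep_path n l)).2 = l.
Proof.
case: n => [|n] //=; case E: (in_arc l) => [a|] // _.
by rewrite last_rcons; case: (in_arc_some E).
Qed.

Lemma dep_path_sorted n l : sorted (fun a b : arcT V => a.2 == b.1.2) (dep_path n l).
Proof.
elim: n l => [|n IH] l //=; case E: (in_arc l) => [a|] //.
have := IH a.1.2; case E2: (dep_path n a.1.2) => [|b s] //= hs.
rewrite rcons_path hs /=.
by have := dep_path_last b (_ : dep_path n a.1.2 != [::]); rewrite E2 /= => ->.
Qed.

Lemma path_verticesP (s : seq (arcT V)) w :
  w \in path_vertices s -> exists2 a, a \in s & (w == a.1.2) || (w == a.2).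
Proof.
case: s => [|a s] //; rewrite /path_vertices in_cons => /predU1P [->|/mapP [a' ha' ->]].
  by exists a; rewrite ?mem_head ?eqxx.
by exists a'; rewrite ?eqxx ?orbT.
Qed.

Lemma dep_path_vertex n l w : w \in path_vertices (dep_path n l) -> exists k, w = iter k dep_par l.
Proof.
case/path_verticesP => a /dep_path_mem [_ [k [head tail]]] /orP [] /eqP ->.
  by exists k.+1.
by exists k.
Qed.

Lemma dep_path_uniq n l : uniq (path_vertices (dep_path n l)).
Proof.
elim: n l => [|n IH] l //=; case E: (in_arc l) => [a|] //.
have [ha _ _] := in_arc_some E; have [_ _ hA neq_A] := arc_apex ha.
have head_new : a.2 \notin path_vertices (dep_path n a.1.2).
  apply/negP => /dep_path_vertex [k eq_k].
  have := anc_apex_iter_dep_par a.1.2 (leq0n k); rewrite /= -eq_k => hA'.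
  by rewrite (anc_antisym hA hA') eqxx in neq_A.
have := IH a.1.2; case: (dep_path n a.1.2) head_new => [|b s] head_new uniq_s.
  by rewrite /= inE andbT; apply: contraNneq neq_A => ->.
suff -> : path_vertices (rcons (b :: s) a) = rcons (path_vertices (b :: s)) a.2.
  by rewrite rcons_uniq head_new.
by rewrite /= map_rcons.
Qed.

Lemma dep_path_tail n l k : k < n -> dep_par (iter k dep_par l) != iter k dep_par l ->
  exists2 a, a \in dep_path n l & a.1.2 = iter k.+1 dep_par l.
Proof.
elim: n l k => [|n IH] l k //= lt_kn proper.
case E: (in_arc l) => [a|]; last first.
  have fixed0 : dep_par (iter 0 dep_par l) = iter 0 dep_par l by apply: in_arc_none.
  by rewrite (iter_dep_par_fixed fixed0 (leq0n k)) fixed0 eqxx in proper.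
have [_ _ tail] := in_arc_some E.
case: k lt_kn proper => [|k] lt_kn proper.
  by exists a; rewrite ?mem_rcons ?mem_head //= tail.
rewrite iterSr tail in proper; have [a' ha' tail'] := IH _ _ lt_kn proper.
by exists a'; rewrite ?mem_rcons ?in_cons ?ha' ?orbT // iterSr tail.
Qed.

(** * Links through a vertex *)

(* Otherwise [prec_u] would skip from [a1.1.2] over [a2.1.2] to a link [a2.2] whose apex is on
   [P_(a1.1.2)]. *)
Lemma arc_label_tail_unique (a1 a2 : arcT V) x : arc a1 -> arc a2 -> a1.1.1 = a2.1.1 ->
  x \in Vl a1.1.2 -> anc (apex a1.1.2) (apex a2.1.2) -> anc (apex a2.2) x -> a1.1.2 = a2.1.2.
Proof.
move=> ha1 ha2 eq_u hx1 hA12 hA2x; apply/eqP/contraT => neq12; exfalso.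
have [_ htail1 _ _ _] := arcP ha1; have [hu htail2 hhead2 hprec2 _] := arcP ha2.
rewrite eq_u in htail1; have [hA2u _ hlamA2 neq_lamA2] := arc_apex ha2.
have hprec12 := prec_of_anc_apex hu htail1 htail2 neq12 hA12.
have neq_A1A2 : apex a1.1.2 != apex a2.2.
  apply: contra neq_lamA2 => /eqP eq_A1A2; rewrite eq_A1A2 in hA12.
  by rewrite (anc_antisym hlamA2 hA12).
have /negP[] := prec_skip_apex hu htail1 htail2 hhead2 hprec12 hprec2 hA2u.
exact: Vl_Pl (Vl_convex (anc_trans hA12 hlamA2) hA2x hx1) neq_A1A2.
Qed.

Lemma dep_path_label_inj n m x (a1 a2 : arcT V) : x \in Vl m ->
  a1 \in dep_path n m -> a2 \in dep_path n m -> a1.1.1 = a2.1.1 ->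
  x \in Vl a1.1.2 -> x \in Vl a2.1.2 -> a1.1.2 = a2.1.2.
Proof.
move=> hxm ha1 ha2 eq_u hx1 hx2.
have [harc1 [k1 [head1 _]]] := dep_path_mem ha1.
have [harc2 [k2 [head2 _]]] := dep_path_mem ha2.
have hAx k : anc (apex (iter k dep_par m)) x.
  exact: anc_trans (anc_apex_iter_dep_par m (leq0n k)) (Vl_anc_apex hxm).
case/orP: (anc_total (Vl_anc_apex hx1) (Vl_anc_apex hx2)) => hA.
  by apply: (arc_label_tail_unique harc1 harc2 eq_u hx1 hA); rewrite head2.
by apply/esym/(arc_label_tail_unique harc2 harc1 (esym eq_u) hx2 hA); rewrite head1.
Qed.

Lemma dep_path_through l0 l m x :
  connect adj l0 l -> connect adj l0 m -> x \in Vl l -> x \in Vl m ->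
  depth (apex l) <= depth (apex m) -> l != m ->
  exists2 a, a \in dep_path #|V|.+1 m & a.1.2 = l.
Proof.
move=> c0l c0m hxl hxm le_lm neq_lm.
have [n le_nV hn] := dep_chain_of_common_vertex c0l c0m hxl hxm le_lm.
have ex_n : exists n, iter n dep_par m == l by exists n; rewrite hn.
case: (ex_minnP ex_n) => [[|n'] /eqP hn' nmin]; first by rewrite -hn' eqxx in neq_lm.
have proper : dep_par (iter n' dep_par m) != iter n' dep_par m.
  apply/eqP => fixed; have := nmin n'.
  by rewrite -hn' iterS fixed eqxx ltnn => /(_ isT).
have lt_n'V : n' < #|V|.+1 by rewrite ltnS (leq_trans (ltnW (nmin n _)) le_nV) ?hn.
by have [a ha tail] := dep_path_tail lt_n'V proper; exists a; rewrite // tail.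
Qed.

Lemma dpath_in_dep_path l0 m n : connect adj l0 m ->
  dpath_in r par Fu U [set l | connect adj l0 l] (dep_path n m).
Proof.
move=> c0m; apply/and3P; split; [|exact: dep_path_sorted|exact: dep_path_uniq].
apply/allP => a /dep_path_mem [ha [k [-> ->]]].
by rewrite ha !inE !connect_iter_dep_par.
Qed.

Lemma thin_component_at l0 k x :
  (forall s, dpath_in r par Fu U [set l | connect adj l0 l] s ->
     #|[set u in U | has (fun a : arcT V => a.1.1 == u) s]| <= k) ->
  #|[set l in [set l | connect adj l0 l] | x \in Vl l]| <= k.+1.
Proof.
move=> path_bound; set S := [set l in [set l | connect adj l0 l] | x \in Vl l].
have memS l : (l \in S) = connect adj l0 l && (x \in Vl l) by rewrite !inE.
case: (set_0Vmem S) => [->|[l1 hl1]]; first by rewrite cards0.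
case: (arg_maxnP (fun l => depth (apex l)) hl1) => m hmS mmax.
have mS : m \in S := hmS; move: (mS); rewrite memS => /andP [c0m hxm].
set s := dep_path #|V|.+1 m.
have tails l : l \in S :\ m -> exists2 a, a \in s & a.1.2 = l.
  rewrite in_setD1 memS => /and3P [neq_lm c0l hxl].
  apply: (dep_path_through c0l c0m hxl hxm (mmax l (_ : l \in S)) neq_lm).
  by rewrite memS c0l.
pose label l := if [pick a | (a \in s) && (a.1.2 == l)] is Some a then a.1.1 else set0.
have labelP l : l \in S :\ m -> exists2 a, a \in s & a.1.2 = l /\ label l = a.1.1.
  move=> hl; rewrite /label; case: pickP => [a /andP [ha /eqP <-]|none]; first by exists a.
  by have [a ha tail] := tails l hl; have := none a; rewrite ha tail eqxx.
have label_inj : {in S :\ m &, injective label}.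
  move=> l l' hl hl'; have [a ha [tail ->]] := labelP l hl.
  have [a' ha' [tail' ->]] := labelP l' hl'.
  move: hl hl'; rewrite !in_setD1 !memS -tail -tail' => /and3P [_ _ hx] /and3P [_ _ hx'] eq_u.
  exact: dep_path_label_inj hxm ha ha' eq_u hx hx'.
have labels_used : label @: (S :\ m) \subset [set u in U | has (fun a : arcT V => a.1.1 == u) s].
  apply/subsetP => _ /imsetP [l hl ->]; have [a ha [_ ->]] := labelP l hl.
  have [/arcP [hu _ _ _ _] _] := dep_path_mem ha.
  by rewrite inE hu; apply/hasP; exists a.
rewrite (cardsD1 m S) mS add1n ltnS -(card_in_imset label_inj).
exact: leq_trans (subset_leq_card labels_used) (path_bound _ (dpath_in_dep_path _ c0m)).
Qed.

End UplinkCovers.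
End RootedTree.

Theorem lemma14 (V : finType) (r : V) (par : V -> V)
  (L : {set {set V}}) (w : {set V} -> rat) (F : {set {set V}})
  (Fu : {set V} -> {set {set V}}) (U : {set {set V}})
  (C : {set {set V}}) (k : nat) :
  (* G is a spanning tree rooted at r, given by parent pointers *)
  par r = r ->
  (forall v : V, exists n, iter n par v = r) ->
  (* WTAP instance *)
  (forall l, l \in L -> #|l| = 2) ->
  (forall l, l \in L -> (0 < w l)%R) ->
  (* F is a WTAP solution: F \subset L and covers every edge *)
  F \subset L ->
  (forall x : V, x != r -> exists2 l, l \in F & x \in Pl r par l) ->
  (* U is a set of up-links with pairwise disjoint P_u *)
  (forall u, u \in U -> (u \in L) && is_uplink par u) ->
  (forall u1 u2, u1 \in U -> u2 \in U -> u1 != u2 ->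
     [disjoint Pl r par u1 & Pl r par u2]) ->
  (* the fixed choices of F_u *)
  (forall u, u \in U -> valid_Fu r par F u (Fu u)) ->
  (* C is a weakly connected component of the dependency graph of U *)
  is_wcomp r par F Fu U C ->
  (* path condition *)
  (forall s, dpath_in r par Fu U C s ->
     #|[set u in U | has (fun a : arcT V => a.1.1 == u) s]| <= k) ->
  thin par k.+1 C.
Proof.
move=> par_r reach_r _ _ _ _ hUL Pl_disjoint Fu_valid /exists_inP [l0 _ /eqP ->] path_bound.
have U_uplink u : u \in U -> is_uplink par u by move/hUL/andP => [].
apply/forallP => x.
exact: (thin_component_at par_r reach_r U_uplink Fu_valid Pl_disjoint x path_bound).
Qed.
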